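(* Let $V$ be a commutative unital quantale whose underlying lattice is a frame. A $V$-homomorphism $f\colon(X,a,+)\to(Y,b,+)$ between $V$-groups is open if and only if it is proper.
   Context: A commutative unital quantale $V$ is a complete lattice with a commutative associative operation $\otimes$ with unit $k$ preserving arbitrary joins in each variable. A $V$-category $(X,a)$: $a\colon X\times X\to V$ with $k\le a(x,x)$ and $a(x,x')\otimes a(x',x'')\le a(x,x'')$. A $V$-group $(X,a,+)$ is a $V$-category with a group structure (additive, not necessarily abelian) such that $a(x_1,x_2)\otimes a(x_1',x_2')\le a(x_1+x_1',x_2+x_2')$; a $V$-homomorphism is a group homomorphism with $a(x,x')\le b(f(x),f(x'))$. A $V$-functor $f\colon(X,a)\to(Y,b)$ is proper if $b(f(x),y)=\bigvee\{a(x,x')\mid x'\in X,\ f(x')=y\}$ for all $x\in X$, $y\in Y$, and open if $b(y,f(x))=\bigvee\{a(x',x)\mid x'\in X,\ f(x')=y\}$ for all $x\in X$, $y\in Y$ (empty joins being $\bot$). *)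

Set Implicit Arguments.

(* A commutative unital quantale: a complete lattice (arbitrary joins qsup
   over subsets given as predicates) with a commutative associative tensor
   having unit qk and preserving arbitrary joins in each variable (by
   commutativity it suffices to require it in the second variable). *)
Record quantale := Quantale {
  qcar :> Type;
  qle : qcar -> qcar -> Prop;
  qle_refl : forall x, qle x x;
  qle_trans : forall x y z, qle x y -> qle y z -> qle x z;
  qle_antisym : forall x y, qle x y -> qle y x -> x = y;
  qsup : (qcar -> Prop) -> qcar;
  qsup_ub : forall (S : qcar -> Prop) x, S x -> qle x (qsup S);
  qsup_least : forall (S : qcar -> Prop) y,
      (forall x, S x -> qle x y) -> qle (qsup S) y;
  qtens : qcar -> qcar -> qcar;
  qk : qcar;
  qtens_assoc : forall x y z, qtens x (qtens y z) = qtens (qtens x y) z;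
  qtens_comm : forall x y, qtens x y = qtens y x;
  qtens_k : forall x, qtens qk x = x;
  qtens_sup : forall x (S : qcar -> Prop),
      qtens x (qsup S) = qsup (fun v => exists y, S y /\ v = qtens x y)
}.

Arguments qle {q} _ _.
Arguments qsup {q} _.
Arguments qtens {q} _ _.

Definition qmeet {V : quantale} (x y : V) : V :=
  qsup (fun z => qle z x /\ qle z y).

Definition is_frame (V : quantale) : Prop :=
  forall (x : V) (S : V -> Prop),
    qmeet x (qsup S) = qsup (fun v => exists y, S y /\ v = qmeet x y).

(* A V-group: a group (X, +, 0, -) (not necessarily abelian) with a
   V-category structure a compatible with + . *)
Record VGroup (V : quantale) := MkVGroup {
  gcar :> Type;
  gadd : gcar -> gcar -> gcar;
  gzero : gcar;
  gopp : gcar -> gcar;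
  gadd_assoc : forall x y z, gadd x (gadd y z) = gadd (gadd x y) z;
  gadd0 : forall x, gadd gzero x = x;
  gaddN : forall x, gadd (gopp x) x = gzero;
  gdist : gcar -> gcar -> V;
  gdist_refl : forall x, qle (qk V) (gdist x x);
  gdist_trans : forall x x' x'',
      qle (qtens (gdist x x') (gdist x' x'')) (gdist x x'');
  gdist_add : forall x1 x2 x1' x2',
      qle (qtens (gdist x1 x2) (gdist x1' x2'))
          (gdist (gadd x1 x1') (gadd x2 x2'))
}.

Arguments gadd {V v} _ _.
Arguments gdist {V v} _ _.

Definition VHom {V : quantale} {X Y : VGroup V} (f : X -> Y) : Prop :=
  (forall x y, f (gadd x y) = gadd (f x) (f y)) /\
  (forall x x', qle (gdist x x') (gdist (f x) (f x'))).

Definition proper {V : quantale} {X Y : VGroup V} (f : X -> Y) : Prop :=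
  forall (x : X) (y : Y),
    gdist (f x) y = qsup (fun v => exists x' : X, f x' = y /\ v = gdist x x').

Definition open {V : quantale} {X Y : VGroup V} (f : X -> Y) : Prop :=
  forall (x : X) (y : Y),
    gdist y (f x) = qsup (fun v => exists x' : X, f x' = y /\ v = gdist x' x).

(** Inversion reverses distances in a V-group: translating by [-x'] on the left
    and by [-x] on the right gives [a(x,x') <= a(-x',-x)], and applying this twice
    gives equality.  A homomorphism commutes with inversion, so rewriting
    [b(f x, y)] as [b(-y, f(-x))], applying openness, and reindexing the fibre
    [f^-1(-y)] by [x' |-> -x'] yields properness.  Since openness of [f] is exactly
    properness of [f] between the dual V-groups (distances reversed), the
    converse follows by duality. *)
From Stdlib Require Import Setoid.

Arguments gopp {V v} _.
Arguments gaddN {V v} _.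
Arguments gadd0 {V v} _.
Arguments gadd_assoc {V v} _ _ _.
Arguments gdist_refl {V v} _.
Arguments gdist_trans {V v} _ _ _.
Arguments gdist_add {V v} _ _ _ _.
Arguments qtens_k {q} _.

Section QuantaleFacts.
Variable V : quantale.

Lemma qsup_ext (S T : V -> Prop) : (forall v, S v <-> T v) -> qsup S = qsup T.
Proof.
  intros HST. apply qle_antisym; apply qsup_least; intros x Hx;
    apply qsup_ub; apply HST; exact Hx.
Qed.

Lemma qle_tensr (t x y : V) : qle x y -> qle (qtens t x) (qtens t y).
Proof.
  intros Hxy.
  assert (Hy : qsup (fun v => v = x \/ v = y) = y).
  { apply qle_antisym.
    - apply qsup_least. intros z [-> | ->]; [exact Hxy | apply qle_refl].
    - apply qsup_ub. now right. }
  rewrite <- Hy, qtens_sup.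
  apply qsup_ub. exists x. split; [now left | reflexivity].
Qed.

Lemma qle_tensl (t x y : V) : qle x y -> qle (qtens x t) (qtens y t).
Proof. intros Hxy. rewrite (qtens_comm _ x), (qtens_comm _ y). now apply qle_tensr. Qed.

End QuantaleFacts.

Section VGroupFacts.
Variables (V : quantale) (X : VGroup V).

Lemma gaddrN (x : X) : gadd x (gopp x) = gzero X.
Proof.
  set (e := gadd x (gopp x)).
  assert (Hee : gadd e e = e).
  { unfold e. rewrite <- gadd_assoc, (gadd_assoc (gopp x) x), gaddN, gadd0.
    reflexivity. }
  transitivity (gadd (gopp e) (gadd e e)).
  - rewrite gadd_assoc, gaddN, gadd0. reflexivity.
  - rewrite Hee. apply gaddN.
Qed.

Lemma gaddr0 (x : X) : gadd x (gzero X) = x.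
Proof. rewrite <- (gaddN x), gadd_assoc, gaddrN, gadd0. reflexivity. Qed.

Lemma goppK (x : X) : gopp (gopp x) = x.
Proof.
  rewrite <- (gaddr0 (gopp (gopp x))), <- (gaddN x), gadd_assoc, gaddN, gadd0.
  reflexivity.
Qed.

Lemma gdist_addl (z x x' : X) : qle (gdist x x') (gdist (gadd z x) (gadd z x')).
Proof.
  eapply qle_trans; [| apply gdist_add].
  rewrite <- (qtens_k (gdist x x')) at 1. apply qle_tensl, gdist_refl.
Qed.

Lemma gdist_addr (z x x' : X) : qle (gdist x x') (gdist (gadd x z) (gadd x' z)).
Proof.
  eapply qle_trans; [| apply gdist_add].
  rewrite <- (qtens_k (gdist x x')) at 1. rewrite qtens_comm.
  apply qle_tensr, gdist_refl.
Qed.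

Lemma gdist_opp_le (x x' : X) : qle (gdist x x') (gdist (gopp x') (gopp x)).
Proof.
  eapply qle_trans; [apply (gdist_addl (gopp x')) |].
  eapply qle_trans; [apply (gdist_addr (gopp x)) |].
  rewrite gaddN, gadd0, <- gadd_assoc, gaddrN, gaddr0. apply qle_refl.
Qed.

Lemma gdist_opp (x x' : X) : gdist x x' = gdist (gopp x') (gopp x).
Proof.
  apply qle_antisym; [apply gdist_opp_le |].
  rewrite <- (goppK x) at 2. rewrite <- (goppK x') at 2. apply gdist_opp_le.
Qed.

Definition dual_vgroup : VGroup V.
Proof.
  refine (@MkVGroup V X gadd (gzero X) gopp gadd_assoc gadd0 gaddN
            (fun x x' => gdist x' x) gdist_refl _ _).
  - intros x x' x''. rewrite qtens_comm. apply gdist_trans.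
  - intros x1 x2 x1' x2'. apply gdist_add.
Defined.

End VGroupFacts.

Arguments gaddrN {V X} _.
Arguments gaddr0 {V X} _.
Arguments goppK {V X} _.
Arguments dual_vgroup {V} X.
Arguments gdist_opp {V X} _ _.

Section Homomorphisms.
Variables (V : quantale) (X Y : VGroup V) (f : X -> Y).
Hypothesis f_add : forall x x', f (gadd x x') = gadd (f x) (f x').

Lemma hom_gzero : f (gzero X) = gzero Y.
Proof.
  assert (Hff : gadd (f (gzero X)) (f (gzero X)) = f (gzero X)).
  { rewrite <- f_add, gadd0. reflexivity. }
  transitivity (gadd (gopp (f (gzero X))) (gadd (f (gzero X)) (f (gzero X)))).
  - rewrite gadd_assoc, gaddN, gadd0. reflexivity.
  - rewrite Hff. apply gaddN.
Qed.

Lemma hom_gopp (x : X) : f (gopp x) = gopp (f x).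
Proof.
  rewrite <- (gaddr0 (f (gopp x))), <- (gaddrN (f x)), gadd_assoc, <- f_add,
    gaddN, hom_gzero, gadd0.
  reflexivity.
Qed.

Lemma qsup_fibre_opp (g h : X -> V) (y : Y) :
  (forall x, g (gopp x) = h x) ->
  qsup (fun v => exists x, f x = gopp y /\ v = g x) =
  qsup (fun v => exists x, f x = y /\ v = h x).
Proof.
  intros Hgh. apply qsup_ext. intros v; split; intros [x [Hx ->]];
    exists (gopp x); rewrite hom_gopp, Hx, ?goppK, <- Hgh, ?goppK; now split.
Qed.

Lemma open_proper : open f -> proper f.
Proof.
  intros Hopen x y.
  rewrite (gdist_opp (f x) y), <- hom_gopp, Hopen.
  apply qsup_fibre_opp. intros x'. rewrite <- gdist_opp. reflexivity.
Qed.

End Homomorphisms.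

Arguments open_proper {V X Y f} _ _.

Theorem proposition5p5 (V : quantale) (HV : is_frame V)
  (X Y : VGroup V) (f : X -> Y) (Hf : VHom f) :
  open f <-> proper f.
Proof.
  destruct Hf as [f_add _].
  split.
  - exact (open_proper f_add).
  - exact (open_proper (X := dual_vgroup X) (Y := dual_vgroup Y) f_add).
Qed.
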